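(* Let $G$ be a graph without isolated vertices and $T$ a solution counting decision tree for $\varphi(G)$. Let $u$ be a node of $T$, $v$ a child of $u$, and $S\subseteq V(G)$. Then $\alpha^v(S)\leq\alpha^u(S)$.
   Context: $\varphi(G)$ is the CNF on variables $V(G)$ with clauses $(u\vee v)$ for $\{u,v\}\in E(G)$. A decision tree for a Boolean function $F$ (not constant false): root labelled by some variable $x$; for each literal $\ell\in\{x,\neg x\}$ occurring in some satisfying assignment, an outgoing edge labelled $\ell$ whose head is a leaf if only one variable remains and otherwise the root of a decision tree for the restriction $F|_\ell$; a solution counting decision tree additionally has edge weights (the proportion of satisfying assignments consistent with the path extended by the edge's literal). For a node $w$, $A_w$ is the set of literals labelling the root-$w$ path. A variable $y$ is forced to $1$ by $A_w$ if some neighbour $z$ of $y$ in $G$ has $\neg z\in A_w$. $N^w(y)$ is the set of neighbours $z$ of $y$ that do not occur in $A_w$ and are not forced to $1$ by $A_w$. For $d\geq0$, $c_d=1-2^{-(2d+1)}$, and $\alpha^w(S)=\prod_{y\in S}c_{|N^w(y)|}$. *)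

From mathcomp Require Import all_boot all_order all_algebra.
Set Implicit Arguments. Unset Strict Implicit. Unset Printing Implicit Defensive.
Import Order.TTheory GRing.Theory Num.Theory.
Local Open Scope ring_scope.

Section Defs.
Variable V : finType.

(* A literal is a pair (x, b): b = true is the literal x, b = false is ~x. *)
Definition lit := (V * bool)%type.

(* Decision trees with edge weights; an absent edge is None. *)
Inductive dtree : Type :=
| Leaf : dtree
| Node : V -> option (rat * dtree) (* edge labelled x *)
            -> option (rat * dtree) (* edge labelled ~x *) -> dtree.

Definition branch (b : bool) (tT tF : option (rat * dtree)) :=
  if b then tT else tF.

Definition consistent (p : seq lit) (s : {ffun V -> bool}) :=
  all (fun l : lit => s l.1 == l.2) p.

(* s satisfies phi(G): every clause (u \/ v), {u,v} an edge, holds *)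
Definition satisfies (e : rel V) (s : {ffun V -> bool}) :=
  [forall u, forall v, e u v ==> s u || s v].

Definition nsol (e : rel V) (p : seq lit) : nat :=
  #|[set s : {ffun V -> bool} | satisfies e s && consistent p s]|.

Definition pvars (p : seq lit) : seq V := [seq l.1 | l <- p].

Definition remaining (p : seq lit) : {set V} := [set x | x \notin pvars p].

(* [sc_tree e p t]: t is a solution counting decision tree for phi(G)|_p
   (the restriction of phi(G) by the literals of p). *)
Fixpoint sc_tree (e : rel V) (p : seq lit) (t : dtree) {struct t} : Prop :=
  match t with
  | Leaf => False
  | Node x tT tF =>
      x \in remaining p /\
      (match tT with
       | None => nsol e (rcons p (x, true)) = 0%N
       | Some (w, t') =>
           (0 < nsol e (rcons p (x, true)))%N /\
           w = (nsol e (rcons p (x, true)))%:R / (nsol e p)%:R /\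
           (if remaining p == [set x] then t' = Leaf
            else sc_tree e (rcons p (x, true)) t')
       end) /\
      (match tF with
       | None => nsol e (rcons p (x, false)) = 0%N
       | Some (w, t') =>
           (0 < nsol e (rcons p (x, false)))%N /\
           w = (nsol e (rcons p (x, false)))%:R / (nsol e p)%:R /\
           (if remaining p == [set x] then t' = Leaf
            else sc_tree e (rcons p (x, false)) t')
       end)
  end.

Inductive reach : dtree -> seq lit -> dtree -> Prop :=
| reach_here t : reach t [::] t
| reach_step x tT tF b w t' p u :
    branch b tT tF = Some (w, t') -> reach t' p u ->
    reach (Node x tT tF) ((x, b) :: p) u.

(* y is forced to 1 by A: some neighbour z of y has ~z in A *)
Definition forced (e : rel V) (A : seq lit) (y : V) : bool :=
  [exists z, e y z && ((z, false) \in A)].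

Definition Nset (e : rel V) (A : seq lit) (y : V) : {set V} :=
  [set z | e y z && (z \notin pvars A) && ~~ forced e A z].

Definition cd (d : nat) : rat := 1 - ((2 ^+ (2 * d).+1)%:R)^-1.

Definition alpha (e : rel V) (A : seq lit) (S : {set V}) : rat :=
  \prod_(y in S) cd #|Nset e A y|.

End Defs.

From mathcomp Require Import all_boot all_order all_algebra.
Set Implicit Arguments. Unset Strict Implicit. Unset Printing Implicit Defensive.
Import Order.TTheory GRing.Theory Num.Theory.
Local Open Scope ring_scope.

(* Going from a node to a child only adds a literal to the path. Adding
   literals can only remove vertices from N(y), as they become assigned or
   forced, and c_d is nondecreasing in d, so every factor of alpha can only
   shrink. *)

Section Antitone.
Variables (V : finType) (e : rel V).
Implicit Types (A B : seq (lit V)) (y z : V).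

Lemma pvars_subset A B : {subset A <= B} -> {subset pvars A <= pvars B}.
Proof. by move=> sAB _ /mapP[l lA ->]; apply: map_f; apply: sAB. Qed.

Lemma forced_subset A B z : {subset A <= B} -> forced e A z -> forced e B z.
Proof.
move=> sAB /existsP[u /andP[ezu uA]]; apply/existsP; exists u.
by rewrite ezu sAB.
Qed.

Lemma Nset_subset A B y : {subset A <= B} -> Nset e B y \subset Nset e A y.
Proof.
move=> sAB; apply/subsetP => z; rewrite !inE => /andP[/andP[-> zB] nfB].
have zA : z \notin pvars A by apply: contra zB; apply: pvars_subset.
by rewrite zA (contra (forced_subset sAB) nfB).
Qed.

Lemma cd_ge0 d : 0 <= cd d.
Proof. by rewrite subr_ge0 invf_le1 ?ltr0n ?expn_gt0 // ler1n expn_gt0. Qed.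

Lemma cd_homo : {homo cd : d d' / (d <= d')%N >-> d <= d'}.
Proof.
move=> d d' le_dd'; rewrite lerD2l lerN2 lef_pV2 ?posrE ?ltr0n ?expn_gt0 //.
by rewrite ler_nat leq_exp2l // ltnS leq_mul2l le_dd' orbT.
Qed.

Lemma alpha_subset A B S : {subset A <= B} -> alpha e B S <= alpha e A S.
Proof.
move=> sAB; apply: ler_prod => y _.
by rewrite cd_ge0 cd_homo // subset_leq_card // Nset_subset.
Qed.

End Antitone.

Theorem lemma12 (V : finType) (e : rel V)
  (e_sym : symmetric e) (e_irr : irreflexive e)
  (no_isolated : forall x : V, exists y, e x y)
  (T : dtree V) (HT : sc_tree e [::] T)
  (p : seq (lit V)) (x : V) (tT tF : option (rat * dtree V))
  (Hu : reach T p (Node x tT tF))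
  (b : bool) (w : rat) (t' : dtree V)
  (Hv : branch b tT tF = Some (w, t'))
  (S : {set V}) :
  alpha e (rcons p (x, b)) S <= alpha e p S.
Proof. by apply: alpha_subset => l pl; rewrite mem_rcons in_cons pl orbT. Qed.
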